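(* Let $\Pi(0)\subsetneq\Pi(1)\subsetneq\cdots\subsetneq\Pi(t-1)$ be fixed subspaces of $\mathbb{F}_q^n$ with $\dim\Pi(j)=d_j$. For $x\in\{u,v\}$ and $j=1,\dots,t$, let $\pi_x(j)$ be the span of $k_x(j)$ vectors chosen uniformly at random from $\Pi(j-1)$, all these draws (over $x$, $j$ and the individual vectors) being mutually independent, where the integers $k_x(j)$ satisfy $1\le k_x(1)<d_0$ and $k_x(j)\le d_{j-1}-d_{j-2}$ for $j=2,\dots,t$. Put $\Pi_x(i)=\sum_{j=1}^i\pi_x(j)$. Then with probability $1-O(q^{-1})$, \[ \Pi_u(i)\not\subseteq\Pi_v(j)\quad\text{and}\quad\Pi_v(j)\not\subseteq\Pi_u(i)\qquad\text{for all } i,j\in\{1,\dots,t\}. \]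
   Context: $O(\cdot)$ refers to $q\to\infty$ with $n,t$ and all dimensions and numbers $k_x(j)$ fixed. *)

From HB Require Import structures.
From mathcomp Require Import all_boot all_order all_algebra.
Set Implicit Arguments. Unset Strict Implicit. Unset Printing Implicit Defensive.
Import Order.TTheory GRing.Theory Num.Theory.

(* Indices: x : bool (true = u, false = v); paper's j = 1..t is j : 'I_t
   (paper index j+1), drawn from Pi(j) (paper's Pi(j-1) after shift).
   A draw is a finite function w : bool * 'I_t * 'I_n -> F^n; the i-th vector
   of pi_x(j) is w (x,j,i) for i < k x j; unused slots are padded by 0. *)

Definition draw (F : finFieldType) (n t : nat) :=
  {ffun bool * 'I_t * 'I_n -> 'rV[F]_n}.

(* Valid draws: every used vector lies in Pi(j), every unused slot is 0.
   The uniform distribution on valid draws is exactly the product of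
   independent uniform draws from the subspaces. *)
Definition valid_draw (F : finFieldType) (n t : nat)
    (Pi : 'I_t -> 'M[F]_n) (k : bool -> 'I_t -> nat) (w : draw F n t) : bool :=
  [forall x : bool, forall j : 'I_t, forall i : 'I_n,
     if (i < k x j)%N then (w (x, j, i) <= Pi j)%MS else w (x, j, i) == (0 : 'rV[F]_n)%R].

Definition pispan (F : finFieldType) (n t : nat) (k : bool -> 'I_t -> nat)
    (w : draw F n t) (x : bool) (j : 'I_t) : 'M[F]_n :=
  (\sum_(i < n | (i < k x j)%N) <<w (x, j, i)>>)%MS.

Definition Pispan (F : finFieldType) (n t : nat) (k : bool -> 'I_t -> nat)
    (w : draw F n t) (x : bool) (i : 'I_t) : 'M[F]_n :=
  (\sum_(j < t | (j <= i)%N) pispan k w x j)%MS.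

Definition bad_draw (F : finFieldType) (n t : nat) (k : bool -> 'I_t -> nat)
    (w : draw F n t) : bool :=
  [exists i : 'I_t, exists j : 'I_t,
     (Pispan k w true i <= Pispan k w false j)%MS
     || (Pispan k w false j <= Pispan k w true i)%MS].

Definition prob_bad (F : finFieldType) (n t : nat)
    (Pi : 'I_t -> 'M[F]_n) (k : bool -> 'I_t -> nat) : rat :=
  (#|[set w : draw F n t | valid_draw Pi k w && bad_draw k w]|%:R
   / #|[set w : draw F n t | valid_draw Pi k w]|%:R)%R.

From HB Require Import structures.
From mathcomp Require Import all_boot all_order all_algebra.
From mathcomp Require Import zify.
Import Order.TTheory GRing.Theory Num.Theory.
Set Implicit Arguments. Unset Strict Implicit. Unset Printing Implicit Defensive.
Local Open Scope ring_scope.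

(* A draw w is one vector per coordinate c = (x, j, i); the valid
   draws form a box, a product of subspaces.  We exhibit at most 2*t*n
   "relevant" coordinates c, each with an obstruction subspace obstruction c w
   that does not depend on w c and does not contain the subspace w c is drawn
   from.  Changing w c by a multiple of a vector outside the obstruction gives
   #|F| distinct valid draws, so at most a 1/q fraction of the box has w c in
   the obstruction (resampling bound); a union bound over c then shows that
   the bad event has probability at most 2tn/q.
   The obstructions are chosen so that avoiding all of them excludes every
   inclusion: for j > 0, each vector of pi_x(j) avoids Pi(j-1) plus the earlier
   vectors of its block ("fresh" draws); then pi_x(j) meets Pi(j-1) trivially,
   hence the total span of side x meets Pi(0) only inside pi_x(0), so by a
   rank count it cannot contain Pi(0).  Finally the first vector of pi_u(0) is
   asked to avoid the total span of side v (and symmetrically), which rules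
   out Pi_u(i) <= Pi_v(j) and Pi_v(j) <= Pi_u(i). *)

Section PrefixSums.
Variables (F : fieldType) (n : nat).

Definition prefix_sum (N : nat) (G : 'I_N -> 'M[F]_n) (m : nat) : 'M[F]_n :=
  (\sum_(i < N | (i < m)%N) G i)%MS.

Definition prefix_span (N : nat) (f : 'I_N -> 'rV[F]_n) (m : nat) : 'M[F]_n :=
  prefix_sum (fun i => <<f i>>%MS) m.

Lemma prefix_sum0 N (G : 'I_N -> 'M[F]_n) : prefix_sum G 0 = 0.
Proof. by rewrite /prefix_sum big_pred0. Qed.

Lemma prefix_sumS N (G : 'I_N -> 'M[F]_n) m (hm : (m < N)%N) :
  prefix_sum G m.+1 = (G (Ordinal hm) + prefix_sum G m)%MS.
Proof.
rewrite /prefix_sum (bigD1 (Ordinal hm)) ?ltnSn //=; congr addsmx.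
by apply: eq_bigl => i; rewrite ltnS -val_eqE /= andbC ltn_neqAle.
Qed.

Lemma prefix_sumS_ge N (G : 'I_N -> 'M[F]_n) m :
  (N <= m)%N -> prefix_sum G m.+1 = prefix_sum G m.
Proof.
move=> hm; apply: eq_bigl => i.
by rewrite (leq_trans (ltn_ord i) hm) (leq_trans (ltn_ord i) (leqW hm)).
Qed.

Lemma prefix_sum_ind N (G : 'I_N -> 'M[F]_n) (P : nat -> 'M[F]_n -> Prop) :
  P 0%N 0 ->
  (forall m (hm : (m < N)%N), P m (prefix_sum G m) ->
     P m.+1 (G (Ordinal hm) + prefix_sum G m)%MS) ->
  (forall m, (N <= m)%N -> P m (prefix_sum G m) -> P m.+1 (prefix_sum G m)) ->
  forall m, P m (prefix_sum G m).
Proof.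
move=> P0 Plt Pge; elim=> [|m IH]; first by rewrite prefix_sum0.
have [hm|hm] := ltnP m N; first by rewrite (prefix_sumS _ hm); exact: Plt.
by rewrite prefix_sumS_ge //; exact: Pge.
Qed.

Lemma rank_prefix_span N (f : 'I_N -> 'rV[F]_n) m : (\rank (prefix_span f m) <= m)%N.
Proof.
apply: (prefix_sum_ind (P := fun m X => \rank X <= m)%N) => [|j hj IH|j _ IH].
- by rewrite mxrank0.
- apply: leq_trans (mxrank_adds_leqif _ _).1 _.
  by rewrite mxrank_gen -(add1n j) leq_add ?rank_leq_row.
- exact: leqW.
Qed.

Lemma cap_add_line0 (D B : 'M[F]_n) (v : 'rV[F]_n) :
  (D :&: B <= (0 : 'M[F]_n))%MS -> ~~ (v <= D + B)%MS -> (D :&: (<<v>> + B) <= (0 : 'M[F]_n))%MS.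
Proof.
move=> DB0 nv.
have rDB : \rank (D :&: B) = 0%N by apply/eqP; rewrite mxrank_eq0 -submx0.
have rvB : (\rank (<<v>> + B) <= 1 + \rank B)%N.
  apply: leq_trans (mxrank_adds_leqif _ _).1 _.
  by rewrite leq_add2r mxrank_gen rank_leq_row.
have grow : (\rank (D + B) < \rank (D + (<<v>> + B)))%N.
  apply: rank_ltmx; rewrite ltmxE addsmxS ?addsmxSr //=.
  apply: contra nv => /(submx_trans _); apply.
  rewrite addsmxA (submx_trans _ (addsmxSl _ B)) //.
  by rewrite (submx_trans _ (addsmxSr D _)) // genmxE.
have := mxrank_sum_cap D (<<v>> + B)%MS; have := mxrank_sum_cap D B.
move=> e1 e2; have : \rank (D :&: (<<v>> + B)) = 0%N by lia.
by move/eqP; rewrite mxrank_eq0 -submx0.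
Qed.

Lemma cap_prefix_span0 N (D : 'M[F]_n) (f : 'I_N -> 'rV[F]_n) m :
  (forall i : 'I_N, (i < m)%N -> ~~ (f i <= D + prefix_span f i)%MS) ->
  (D :&: prefix_span f m <= (0 : 'M[F]_n))%MS.
Proof.
apply: (prefix_sum_ind (P := fun m X =>
  (forall i : 'I_N, (i < m)%N -> ~~ (f i <= D + prefix_span f i)%MS) ->
  (D :&: X <= (0 : 'M[F]_n))%MS)) => [_|j hj IH fr|j _ IH fr].
- by rewrite capmx0.
- apply: cap_add_line0; first by apply: IH => i hi; apply: fr; exact: ltnW.
  exact: (fr (Ordinal hj)).
- by apply: IH => i hi; apply: fr; exact: ltnW.
Qed.

Lemma capmx_add_disjoint (A B C D : 'M[F]_n) :
  (A :&: D <= (0 : 'M[F]_n))%MS -> (B <= D)%MS -> (C <= D)%MS -> ((A + B) :&: C <= B :&: C)%MS.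
Proof.
move=> AD0 BD CD; rewrite sub_capmx capmxSr andbT.
apply: submx_trans (capmxS (submx_refl (A + B)%MS) CD) _.
rewrite addsmxC -(matrix_modl A BD).
by apply: submx_trans (addsmxS (submx_refl B) AD0) _; rewrite addsmx0.
Qed.

Lemma chain_cap_base N (P B : 'I_N -> 'M[F]_n) (j0 : 'I_N) :
  j0 = 0%N :> nat ->
  (forall i j : 'I_N, (i <= j)%N -> (P i <= P j)%MS) ->
  (forall j, (B j <= P j)%MS) ->
  (forall i j : 'I_N, j = i.+1 :> nat -> (P i :&: B j <= (0 : 'M[F]_n))%MS) ->
  forall m, (prefix_sum B m :&: P j0 <= B j0)%MS.
Proof.
move=> j00 Pmono BP fresh.
apply: (prefix_sum_ind (P := fun _ X => (X :&: P j0 <= B j0)%MS)) => [|m hm IH|//].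
  by rewrite cap0mx sub0mx.
case: m hm IH => [|i] hm IH.
  have -> : Ordinal hm = j0 by apply: val_inj; rewrite /= j00.
  by rewrite prefix_sum0 (submx_trans (capmxSl _ _)) ?addsmx0.
have hi : (i < N)%N by exact: ltnW.
apply: submx_trans IH; apply: (capmx_add_disjoint (D := P (Ordinal hi))).
- by rewrite capmxC fresh.
- apply/sumsmx_subP => l hl; apply: submx_trans (BP l) _; exact: Pmono.
- by apply: Pmono; rewrite j00.
Qed.
End PrefixSums.

Section Resample.
Variables (F : finFieldType) (I : finType) (n : nat) (U : I -> 'M[F]_n).

Definition box : {set {ffun I -> 'rV[F]_n}} := [set w : {ffun I -> 'rV[F]_n} | [forall c, (w c <= U c)%MS]].

Definition outside (A M : 'M[F]_n) : 'rV[F]_n :=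
  odflt 0 [pick z : 'rV[F]_n | (z <= A)%MS && ~~ (z <= M)%MS].

Lemma outsideP (A M : 'M[F]_n) :
  ~~ (A <= M)%MS -> (outside A M <= A)%MS && ~~ (outside A M <= M)%MS.
Proof.
move=> nAM; rewrite /outside; case: pickP => [z -> //|none].
case/negP: nAM; apply/rV_subP => v vA.
by apply: contraFT (none v) => nvM; rewrite vA nvM.
Qed.

Variables (c : I) (V : {ffun I -> 'rV[F]_n} -> 'M[F]_n).
Hypothesis V_indep : forall w w' : {ffun I -> 'rV[F]_n},
  (forall c', c' != c -> w c' = w' c') -> V w = V w'.
Hypothesis Uc_notin_V : forall w, ~~ (U c <= V w)%MS.

Definition resample (p : {ffun I -> 'rV[F]_n} * F) : {ffun I -> 'rV[F]_n} :=
  [ffun c' => if c' == c then p.1 c + p.2 *: outside (U c) (V p.1) else p.1 c'].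

Lemma resample_off p c' : c' != c -> resample p c' = p.1 c'.
Proof. by rewrite ffunE => /negbTE ->. Qed.

Lemma resample_box w a : w \in box -> resample (w, a) \in box.
Proof.
rewrite !inE => /forallP wU; apply/forallP => c'; rewrite ffunE.
case: eqP => [->|_] //=; apply: addmx_sub; first exact: wU.
by apply: scalemx_sub; case/andP: (outsideP (Uc_notin_V w)).
Qed.

(* Resampling is injective on draws with w c in V w, since V is unchanged and
   the shifting vector is outside V w. *)
Lemma resample_inj :
  {in setX [set w in box | (w c <= V w)%MS] [set: F] &, injective resample}.
Proof.
move=> [w a] [w' a'] /setXP[/= +  _] /setXP[/= + _] e.
rewrite !inE => /andP[_ wV] /andP[_ wV'].
have off c' : c' != c -> w c' = w' c'.
  by move=> nc; rewrite -[w c']/((w, a).1 c') -resample_off // e resample_off.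
have eV := V_indep off; rewrite -eV in wV'.
move/ffunP: e => /(_ c); rewrite !ffunE eqxx /= -eV.
set z := outside _ _ => e.
have /andP[_ zV] := outsideP (Uc_notin_V w).
have ea : a = a'.
  apply/eqP; apply: contraR zV => neq.
  have dz : (a - a') *: z = w' c - w c.
    by apply/eqP; rewrite scalerBl subr_eq addrAC -e addrC addKr.
  have : ((a - a') *: z <= V w)%MS by rewrite dz addmx_sub ?eqmx_opp.
  by move/(scalemx_sub (a - a')^-1); rewrite scalerA mulVf ?subr_eq0 // scale1r.
subst a'; move/addIr: e => e.
by congr pair; apply/ffunP => c'; case: (eqVneq c' c) => [->|nc]; last exact: off.
Qed.

Lemma resample_bound : (#|[set w in box | (w c <= V w)%MS]| * #|F| <= #|box|)%N.
Proof.
set A := [set w in box | _].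
have <- : #|setX A [set: F]| = (#|A| * #|F|)%N by rewrite cardsX cardsT.
rewrite -(card_in_imset resample_inj); apply: subset_leq_card.
apply/subsetP => _ /imsetP[[w a] /setXP[/= wA _] ->].
by apply: resample_box; move: wA; rewrite inE => /andP[].
Qed.
End Resample.

Lemma card_bigcup_leq (I T : finType) (A : I -> {set T}) :
  (#|\bigcup_i A i| <= \sum_i #|A i|)%N.
Proof.
elim/big_rec2: _ => [|i s X _ h]; first by rewrite cards0.
by apply: leq_trans (leq_card_setU _ _).1 _; rewrite leq_add2l.
Qed.

Lemma union_bound (I T : finType) (B : {set T}) (A : I -> {set T}) (q s : nat) :
  B \subset \bigcup_i A i -> (forall i, #|A i| * q <= s)%N ->
  (#|B| * q <= #|I| * s)%N.
Proof.
move=> BA As; apply: leq_trans (leq_mul (subset_leq_card BA) (leqnn q)) _.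
apply: leq_trans (leq_mul (card_bigcup_leq A) (leqnn q)) _.
rewrite big_distrl /= -sum_nat_const; exact: leq_sum.
Qed.

Lemma ratio_le (R : numFieldType) (a b q N : nat) :
  (0 < q)%N -> (a * q <= N * b)%N -> a%:R / b%:R <= N%:R / q%:R :> R.
Proof.
move=> q0 aqNb; have [->|b0] := posnP b.
  by rewrite invr0 mulr0 divr_ge0 ?ler0n.
rewrite ler_pdivrMr ?ltr0n // mulrAC ler_pdivlMr ?ltr0n //.
by rewrite -!natrM ler_nat.
Qed.

Section RandomFlags.
Variables (F : finFieldType) (n t : nat) (d : 'I_t -> nat) (k : bool -> 'I_t -> nat)
  (Pi : 'I_t -> 'M[F]_n).
Hypothesis hk1 : forall (x : bool) (j : 'I_t), nat_of_ord j = 0%N ->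
  (1 <= k x j)%N /\ (k x j < d j)%N.
Hypothesis hk2 : forall (x : bool) (j j' : 'I_t), nat_of_ord j = j'.+1 ->
  (k x j <= d j - d j')%N.
Hypothesis hrank : forall j : 'I_t, \rank (Pi j) = d j.
Hypothesis hmono : forall i j : 'I_t, (i < j)%N -> (Pi i < Pi j)%MS.

Definition coord_dom (c : bool * 'I_t * 'I_n) : 'M[F]_n :=
  if (c.2 < k c.1.1 c.1.2)%N then Pi c.1.2 else 0.

Lemma valid_drawE (w : draw F n t) : valid_draw Pi k w = (w \in box coord_dom).
Proof.
rewrite inE; apply/forallP/forallP => [vw [[x j] i]|vw x].
  move: (vw x) => /forallP/(_ j)/forallP/(_ i); rewrite /coord_dom /=.
  by case: ifP => // _ /eqP ->; exact: sub0mx.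
apply/forallP => j; apply/forallP => i.
by move: (vw (x, j, i)); rewrite /coord_dom /=; case: ifP; rewrite ?submx0.
Qed.

Definition prev (j : 'I_t) : 'I_t := Ordinal (leq_ltn_trans (leq_pred j) (ltn_ord j)).

Lemma prev_succ (j : 'I_t) : (0 < j)%N -> j = (prev j).+1 :> nat.
Proof. by move=> j0; rewrite /= prednK. Qed.

Definition block (w : draw F n t) (x : bool) (j : 'I_t) : 'I_n -> 'rV[F]_n :=
  fun i => w (x, j, i).

Definition total_span (w : draw F n t) (x : bool) : 'M[F]_n :=
  prefix_sum (pispan k w x) t.

Definition fresh (w : draw F n t) (x : bool) : bool :=
  [forall j : 'I_t, forall i : 'I_n, (i < k x j)%N ==> (w (x, j, i) <= Pi j)%MS] &&
  [forall j : 'I_t, forall i : 'I_n, (0 < j)%N && (i < k x j)%N ==>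
     ~~ (w (x, j, i) <= Pi (prev j) + prefix_span (block w x j) i)%MS].

Lemma Pi_mono (i j : 'I_t) : (i <= j)%N -> (Pi i <= Pi j)%MS.
Proof.
rewrite leq_eqVlt => /orP[/eqP e|lt]; last exact: ltmxW (hmono lt).
by rewrite (val_inj e).
Qed.

Lemma fresh_pispan_sub (w : draw F n t) x (j : 'I_t) : fresh w x -> (pispan k w x j <= Pi j)%MS.
Proof.
case/andP => /forallP/(_ j)/forallP vw _; apply/sumsmx_subP => i hi.
by rewrite genmxE; move/implyP: (vw i); apply.
Qed.

Lemma fresh_block_cap0 (w : draw F n t) x (j : 'I_t) : fresh w x -> (0 < j)%N ->
  (Pi (prev j) :&: pispan k w x j <= (0 : 'M[F]_n))%MS.
Proof.
case/andP => _ /forallP/(_ j)/forallP fr j0.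
apply: (cap_prefix_span0 (f := block w x j)) => i hi.
by move/implyP: (fr i); apply; rewrite j0.
Qed.

(* For a fresh side, the total span meets Pi(0) inside pi_x(0), whose
   dimension k x 0 is below d 0; hence it cannot contain Pi(0). *)
Lemma fresh_base_notin_total (w : draw F n t) x (j0 : 'I_t) :
  fresh w x -> j0 = 0%N :> nat -> ~~ (Pi j0 <= total_span w x)%MS.
Proof.
move=> fw j00; apply/negP => Pi0_sub.
have base : (total_span w x :&: Pi j0 <= pispan k w x j0)%MS.
  apply: chain_cap_base => //; first exact: Pi_mono.
  - by move=> j; exact: fresh_pispan_sub.
  - move=> i j ji; have jpos : (0 < j)%N by rewrite ji.
    by rewrite (_ : i = prev j) ?fresh_block_cap0 //; apply: val_inj; rewrite /= ji.
have : (Pi j0 <= pispan k w x j0)%MS.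
  by apply: submx_trans base; rewrite sub_capmx Pi0_sub submx_refl.
move/mxrankS; rewrite hrank; have [_ kd] := hk1 x j00.
have rk : (\rank (pispan k w x j0) <= k x j0)%N := rank_prefix_span _ _.
lia.
Qed.

Definition obstruction (c : bool * 'I_t * 'I_n) (w : draw F n t) : 'M[F]_n :=
  let: (x, j, i) := c in
  if j == 0%N :> nat then (if fresh w (~~ x) then total_span w (~~ x) else 0)
  else (Pi (prev j) + prefix_span (block w x j) i)%MS.

Definition relevant (c : bool * 'I_t * 'I_n) : bool :=
  let: (x, j, i) := c in (i < k x j)%N && ((j == 0%N :> nat) ==> (i == 0%N :> nat)).

Lemma fresh_indep (w w' : draw F n t) x :
  (forall j i, w (x, j, i) = w' (x, j, i)) ->
  fresh w x = fresh w' x /\ total_span w x = total_span w' x.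
Proof.
move=> e; have es j m : prefix_span (block w x j) m = prefix_span (block w' x j) m.
  by apply: eq_bigr => l _; rewrite /block e.
split; last by apply: eq_bigr => j _; exact: es.
by congr andb; apply: eq_forallb => j; apply: eq_forallb => i; rewrite e ?es.
Qed.

Lemma obstruction_indep c (w w' : draw F n t) :
  (forall c', c' != c -> w c' = w' c') -> obstruction c w = obstruction c w'.
Proof.
case: c => [[x j] i] e /=; case: ifP => _.
  have off j' i' : w (~~ x, j', i') = w' (~~ x, j', i').
    by apply: e; apply/negP => /eqP[]; case: x.
  by have [-> ->] := fresh_indep off.
congr addsmx; apply: eq_bigr => l hl; rewrite /block e //.
by apply: contraTneq hl => -[->]; rewrite ltnn.
Qed.

(* The obstruction never contains the subspace w c is drawn from: by
   fresh_base_notin_total at level 0 and by a dimension count (hk2) above. *)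
Lemma obstruction_proper c (w : draw F n t) :
  relevant c -> ~~ (coord_dom c <= obstruction c w)%MS.
Proof.
case: c => [[x j] i] /andP[ik _]; rewrite /coord_dom /= ik.
case: ifP => [/eqP j0|jn0].
  case: ifP => fw; first exact: fresh_base_notin_total.
  by rewrite submx0 -mxrank_eq0 hrank; have [k1 kd] := hk1 x j0; lia.
apply/negP => /mxrankS; rewrite hrank.
have hr : (\rank (Pi (prev j) + prefix_span (block w x j) i) <= d (prev j) + i)%N.
  apply: leq_trans (mxrank_adds_leqif _ _).1 _.
  by rewrite hrank leq_add2l rank_prefix_span.
by have := hk2 x (prev_succ (j := j) _); rewrite lt0n jn0; lia.
Qed.

(* A bad valid draw hits some obstruction: otherwise both sides are fresh, and
   the first vector of pi_u(0), which lies in every Pi_u(i), would lie outside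
   the total span of side v, contradicting an inclusion (and symmetrically). *)
Lemma bad_cover (w : draw F n t) : valid_draw Pi k w -> bad_draw k w ->
  exists c, relevant c && (w c <= obstruction c w)%MS.
Proof.
move=> vw /existsP[i /existsP[j incl]].
apply/existsP; apply: contraT => /existsPn nobad.
have fw y : fresh w y.
  apply/andP; split.
    apply/forallP => j'; apply/forallP => m; apply/implyP => hm.
    by move: vw => /forallP/(_ y)/forallP/(_ j')/forallP/(_ m); rewrite hm.
  apply/forallP => j'; apply/forallP => m; apply/implyP => /andP[hj hm].
  by have := nobad (y, j', m); rewrite /relevant /obstruction eqn0Ngt hj /= hm.
pose j0 : 'I_t := Ordinal (leq_ltn_trans (leq0n i) (ltn_ord i)).
have k0 y : (0 < k y j0)%N by have [] := hk1 y (erefl : nat_of_ord j0 = 0%N).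
have n0 : (0 < n)%N.
  have [_ kd] := hk1 true (erefl : nat_of_ord j0 = 0%N).
  by have := rank_leq_col (Pi j0); rewrite hrank; have := k0 true; lia.
pose m0 : 'I_n := Ordinal n0.
have first_out y : ~~ (w (y, j0, m0) <= total_span w (~~ y))%MS.
  by have := nobad (y, j0, m0); rewrite /relevant /obstruction /= fw k0.
have first_in y (l : 'I_t) : (w (y, j0, m0) <= Pispan k w y l)%MS.
  by apply: (sumsmx_sup j0) => //; apply: (sumsmx_sup m0); rewrite ?k0 ?genmxE.
have Pispan_total y (l : 'I_t) : (Pispan k w y l <= total_span w y)%MS.
  by apply/sumsmx_subP => l' _; apply: (sumsmx_sup l').
case/orP: incl => sub.
  by case/negP: (first_out true); rewrite (submx_trans (first_in true i)) //
    (submx_trans sub) ?Pispan_total.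
by case/negP: (first_out false); rewrite (submx_trans (first_in false j)) //
  (submx_trans sub) ?Pispan_total.
Qed.

Lemma bad_count :
  (#|[set w : draw F n t | valid_draw Pi k w && bad_draw k w]| * #|F|
     <= #|{: bool * 'I_t * 'I_n}| * #|[set w : draw F n t | valid_draw Pi k w]|)%N.
Proof.
have -> : [set w : draw F n t | valid_draw Pi k w] = box coord_dom.
  by apply/setP => w; rewrite inE valid_drawE.
pose A c := if relevant c then [set w in box coord_dom | (w c <= obstruction c w)%MS]
            else set0.
apply: (union_bound (A := A)).
  apply/subsetP => w; rewrite inE => /andP[vw bw].
  have [c /andP[rc wc]] := bad_cover vw bw.
  by apply/bigcupP; exists c => //; rewrite /A rc inE -valid_drawE vw.
move=> c; rewrite /A; case: ifP => rc; last by rewrite cards0.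
apply: resample_bound => [w w'|w]; first exact: obstruction_indep.
exact: obstruction_proper.
Qed.
End RandomFlags.

Local Close Scope ring_scope.
Unset Implicit Arguments.

Theorem lemma4 (n t : nat) (d : 'I_t -> nat) (k : bool -> 'I_t -> nat)
  (hk1 : forall (x : bool) (j : 'I_t), nat_of_ord j = 0%N ->
           (1 <= k x j)%N /\ (k x j < d j)%N)
  (hk2 : forall (x : bool) (j j' : 'I_t), nat_of_ord j = j'.+1 ->
           (k x j <= d j - d j')%N) :
  exists C : rat, forall (F : finFieldType) (Pi : 'I_t -> 'M[F]_n),
    (forall j : 'I_t, \rank (Pi j) = d j) ->
    (forall i j : 'I_t, (i < j)%N -> (Pi i < Pi j)%MS) ->
    (prob_bad Pi k <= C / (#|F|%:R))%R.
Proof.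
exists (#|{: bool * 'I_t * 'I_n}|%:R)%R => F Pi hrank hmono.
apply: ratio_le; first by apply/card_gt0P; exists 0%R.
exact: bad_count hk1 hk2 hrank hmono.
Qed.
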